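(* Let $D$ be a finite division semialgebra over $\mathbb{Z}_\mathrm{max}$. Then $D\cong F^{(n)}$ for some positive integer $n$ (in particular $D$ is commutative).
   Context: A (possibly noncommutative) semiring is a set with two associative binary operations, addition (commutative, with identity $0$) and multiplication (with identity $1$), satisfying both distributive laws. A division semiring is a semiring in which every nonzero element has a two-sided multiplicative inverse; a semifield is a commutative division semiring. $\mathbb{Z}_\mathrm{max}=\mathbb{Z}\cup\{-\infty\}$ is the semifield with addition $\max$ and multiplication ordinary addition; writing $u$ for the integer $1$ in it, $\mathbb{Z}_\mathrm{max}=\{0\}\cup\{u^k:k\in\mathbb{Z}\}$ with $u^a+u^b=u^{\max(a,b)}$. A division semialgebra over a semifield $K$ is a division semiring $D$ together with an injective homomorphism from $K$ into the center of $D$; it is finite if $D$ is finitely generated as a left $K$-semimodule. For a positive integer $n$, $F^{(n)}$ is the semifield $\mathbb{Z}_\mathrm{max}$ regarded as an extension of $\mathbb{Z}_\mathrm{max}$ via $u^k\mapsto u^{nk}$, $0\mapsto 0$; the isomorphism is one of semialgebras over $\mathbb{Z}_\mathrm{max}$. *)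

From HB Require Import structures.
From mathcomp Require Import all_boot all_order all_algebra.
Set Implicit Arguments. Unset Strict Implicit. Unset Printing Implicit Defensive.
Import Order.TTheory GRing.Theory Num.Theory.
Local Open Scope ring_scope.

(* The semifield Z_max = Z ∪ {-oo}: [None] is the zero (-oo),
   [Some k] is u^k; addition is max, multiplication is addition of exponents. *)
Definition zmax := option int.
Definition zmax0 : zmax := None.
Definition zmax1 : zmax := Some 0.
Definition zmax_add (a b : zmax) : zmax :=
  match a, b with
  | None, x => x
  | x, None => x
  | Some i, Some j => Some (Num.max i j)
  end.
Definition zmax_mul (a b : zmax) : zmax :=
  match a, b with
  | Some i, Some j => Some (i + j)
  | _, _ => None
  end.

(* The embedding Z_max -> F^(n) = Z_max, u^k |-> u^(nk), 0 |-> 0. *)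
Definition zmax_pow_embed (n : nat) (a : zmax) : zmax :=
  match a with
  | None => None
  | Some k => Some (k * n%:Z)
  end.

Definition zmax_semiring_hom (D : pzSemiRingType) (phi : zmax -> D) : Prop :=
  [/\ phi zmax0 = 0, phi zmax1 = 1,
      forall a b, phi (zmax_add a b) = phi a + phi b
    & forall a b, phi (zmax_mul a b) = phi a * phi b].

Definition semiring_hom_to_zmax (D : pzSemiRingType) (psi : D -> zmax) : Prop :=
  [/\ psi 0 = zmax0, psi 1 = zmax1,
      forall x y, psi (x + y) = zmax_add (psi x) (psi y)
    & forall x y, psi (x * y) = zmax_mul (psi x) (psi y)].

Definition division_semiring (D : pzSemiRingType) : Prop :=
  forall x : D, x <> 0 -> exists y : D, x * y = 1 /\ y * x = 1.

Definition division_semialgebra_zmax (D : pzSemiRingType) (phi : zmax -> D) : Prop :=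
  [/\ division_semiring D, zmax_semiring_hom phi, injective phi
    & forall (k : zmax) (d : D), phi k * d = d * phi k].

Definition finite_semialgebra (D : pzSemiRingType) (phi : zmax -> D) : Prop :=
  exists s : seq D, forall d : D, exists ks : seq zmax,
    size ks = size s /\ d = \sum_(i < size s) phi (nth zmax0 ks i) * s`_i.

From mathcomp Require Import all_boot all_order all_algebra zify.
From Stdlib Require Import Classical ClassicalEpsilon.
Set Implicit Arguments. Unset Strict Implicit. Unset Printing Implicit Defensive.
Import Order.TTheory GRing.Theory Num.Theory.
Local Open Scope ring_scope.

(* Write t = phi(u). Since 1 + 1 = 1, D is idempotent and a <=+ b := (a + b = b)
   is a partial order compatible with multiplication on both sides. Finite
   generation traps every nonzero element between two powers of t. If every
   nonzero element were the sum of two elements different from it, any generator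
   could be dropped from a finite generating family, because x = t^j x + r with
   j < 0 forces x = r; so some element is join-irreducible, and multiplying onto it
   shows that the order is total. Then every nonzero element is t^k times a
   generator, so only finitely many elements lie in (1, t]; the least of them,
   p, is the least element above 1. Some power of p is a power of t, every
   nonzero element is an integer power of p, and t = p^n. *)

Definition addle (D : pzSemiRingType) (a b : D) := a + b = b.
Notation "a <=+ b" := (addle a b) (at level 70, no associativity).
Notation "a <+ b" := (addle a b /\ (a <> b)%R) (at level 70, no associativity).

Section IdempotentOrder.
Variable D : pzSemiRingType.
Hypothesis addrr : forall x : D, x + x = x.
Implicit Types a b c d : D.

Lemma addle_refl a : a <=+ a. Proof. exact: addrr. Qed.

Lemma addle_trans b a c : a <=+ b -> b <=+ c -> a <=+ c.
Proof. by rewrite /addle => ab bc; rewrite -bc addrA ab. Qed.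

Lemma addle_anti a b : a <=+ b -> b <=+ a -> a = b.
Proof. by rewrite /addle => ab ba; rewrite -ab -{1}ba addrC. Qed.

Lemma addleD a b c d : a <=+ b -> c <=+ d -> a + c <=+ b + d.
Proof. by rewrite /addle => ab cd; rewrite addrACA ab cd. Qed.

Lemma addle_addl a b : a <=+ a + b.
Proof. by rewrite /addle addrA addrr. Qed.

Lemma addle_join a b c : a <=+ c -> b <=+ c -> a + b <=+ c.
Proof. by move=> ac bc; rewrite -(addrr c); apply: addleD. Qed.

Lemma addle_mul2l c a b : a <=+ b -> c * a <=+ c * b.
Proof. by rewrite /addle => ab; rewrite -mulrDr ab. Qed.

Lemma addle_mul2r c a b : a <=+ b -> a * c <=+ b * c.
Proof. by rewrite /addle => ab; rewrite -mulrDl ab. Qed.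

Lemma add0le a : 0 <=+ a. Proof. by rewrite /addle add0r. Qed.

Lemma addle0 a : a <=+ 0 -> a = 0. Proof. by rewrite /addle addr0. Qed.

Lemma addr_eq0l a b : a + b = 0 -> a = 0.
Proof. by move=> ab0; apply: addle0; rewrite -ab0; apply: addle_addl. Qed.

End IdempotentOrder.

Section DivisionSemiring.
Variable D : pzSemiRingType.
Hypothesis D_division : division_semiring D.
Implicit Types x y z : D.

Lemma div_mulf_neq0 x y : x <> 0 -> y <> 0 -> x * y <> 0.
Proof.
move=> x0 y0 xy0; have [x' [_ x'x]] := D_division x0.
by apply: y0; rewrite -(mul1r y) -x'x -mulrA xy0 mulr0.
Qed.

Lemma div_mulfI x y z : x <> 0 -> x * y = x * z -> y = z.
Proof.
move=> x0 e; have [x' [_ x'x]] := D_division x0.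
by rewrite -(mul1r y) -(mul1r z) -x'x -!mulrA e.
Qed.

Lemma div_mulIf x y z : x <> 0 -> y * x = z * x -> y = z.
Proof.
move=> x0 e; have [x' [xx' _]] := D_division x0.
by rewrite -(mulr1 y) -(mulr1 z) -xx' !mulrA e.
Qed.

End DivisionSemiring.

Lemma int_subn (j : int) : exists a b : nat, j = a%:Z - b%:Z.
Proof.
by case: j => n; [exists n, 0%N; rewrite subr0 | exists 0%N, n.+1; rewrite sub0r].
Qed.

Lemma pigeonhole_ord m (R : 'I_m.+1 -> 'I_m -> Prop) :
  (forall j, exists i, R j i) ->
  exists (j1 j2 : 'I_m.+1) i, (j1 < j2)%N /\ R j1 i /\ R j2 i.
Proof.
case/choice=> f fR; case: (boolP (injectiveb f)) => [/injectiveP f_inj|].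
  by have := leq_card f f_inj; rewrite !card_ord ltnn.
case/injectivePn=> j1 [j2 j12 fj12]; case: (ltngtP j1 j2) => [lt12|gt12|eq12].
- by exists j1, j2, (f j1); rewrite [in R j2 _]fj12.
- by exists j2, j1, (f j2); rewrite -[in R j1 _]fj12.
- by rewrite (val_inj eq12) eqxx in j12.
Qed.

Section IntPowers.
Variable R : pzSemiRingType.
Variables p q : R.
Hypotheses (pq : p * q = 1) (qp : q * p = 1).

Lemma exprpq n : p ^+ n * q ^+ n = 1.
Proof.
elim: n => [|n IH]; first by rewrite !expr0 mulr1.
by rewrite exprSr exprS mulrA -(mulrA _ p) pq mulr1 IH.
Qed.

Lemma exprqp n : q ^+ n * p ^+ n = 1.
Proof.
elim: n => [|n IH]; first by rewrite !expr0 mulr1.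
by rewrite exprSr exprS mulrA -(mulrA _ q) qp mulr1 IH.
Qed.

Lemma commr_expr_pq a b : p ^+ a * q ^+ b = q ^+ b * p ^+ a.
Proof.
have pq_comm : GRing.comm p q by rewrite /GRing.comm pq qp.
by apply: commrX; apply/commr_sym/commrX/commr_sym.
Qed.

Definition zpow (j : int) : R :=
  match j with Posz n => p ^+ n | Negz n => q ^+ n.+1 end.

Lemma zpow_subn (a b : nat) : p ^+ a * q ^+ b = zpow (a%:Z - b%:Z).
Proof.
elim: b a => [|b IH] [|a].
- by rewrite !expr0 mulr1.
- by rewrite expr0 mulr1 subr0.
- by rewrite expr0 mul1r sub0r -NegzE.
- rewrite exprSr exprS mulrA -(mulrA _ p) pq mulr1 IH; congr zpow; lia.
Qed.

Lemma zpowD a b : zpow (a + b) = zpow a * zpow b.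
Proof.
have [a1 [a2 ->]] := int_subn a; have [b1 [b2 ->]] := int_subn b.
rewrite -!zpow_subn mulrA -(mulrA (p ^+ a1)) -commr_expr_pq mulrA -exprD.
by rewrite -mulrA -exprD zpow_subn; congr zpow; lia.
Qed.

Lemma zpow0 : zpow 0 = 1. Proof. exact: expr0. Qed.

Lemma zpowN j : zpow j * zpow (- j) = 1.
Proof. by rewrite -zpowD subrr zpow0. Qed.

Lemma zpowMn j (a : nat) : zpow (j * a%:Z) = zpow j ^+ a.
Proof.
elim: a => [|a IH]; first by rewrite mulr0 zpow0 expr0.
by rewrite exprSr -IH -zpowD -[a.+1]addn1 PoszD mulrDr mulr1.
Qed.

Lemma zpowC a b : zpow a * zpow b = zpow b * zpow a.
Proof. by rewrite -!zpowD addrC. Qed.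

End IntPowers.

Section ZmaxSemialgebra.
Variables (D : pzSemiRingType) (phi : zmax -> D).
Hypothesis phiP : division_semialgebra_zmax phi.
Local Notation t k := (phi (Some k)).

Lemma phi0 : phi None = 0. Proof. by case: phiP => _ []. Qed.
Lemma t0 : t 0 = 1. Proof. by case: phiP => _ []. Qed.

Lemma phiD a b : phi (zmax_add a b) = phi a + phi b.
Proof. by case: phiP => _ []. Qed.

Lemma phiM a b : phi (zmax_mul a b) = phi a * phi b.
Proof. by case: phiP => _ []. Qed.

Lemma phi_inj : injective phi. Proof. by case: phiP. Qed.
Lemma D_division : division_semiring D. Proof. by case: phiP. Qed.

Lemma tD a b : t a + t b = t (Num.max a b). Proof. by rewrite -phiD. Qed.
Lemma tM a b : t a * t b = t (a + b). Proof. by rewrite -phiM. Qed.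

Lemma oner_neq0 : (1 : D) <> 0.
Proof. by rewrite -t0 -phi0 => /phi_inj. Qed.

Lemma addrr (x : D) : x + x = x.
Proof. by rewrite -{1 2}(mulr1 x) -mulrDr -t0 tD maxxx t0 mulr1. Qed.

Lemma t_mono a b : (a <= b)%R -> t a <=+ t b.
Proof. by move=> ab; rewrite /addle tD (max_idPr ab). Qed.

Lemma tNr k : t k * t (- k) = 1. Proof. by rewrite tM subrr t0. Qed.
Lemma tNl k : t (- k) * t k = 1. Proof. by rewrite tM addNr t0. Qed.

Lemma t_neq0 k : t k <> 0.
Proof. by move=> tk0; apply: oner_neq0; rewrite -(tNr k) tk0 mul0r. Qed.

Lemma tMn e (N : nat) : t (e * N%:Z) = t e ^+ N.
Proof.
elim: N => [|N IH]; first by rewrite mulr0 t0 expr0.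
by rewrite exprSr -IH tM -[N.+1]addn1 PoszD mulrDr mulr1.
Qed.

Lemma phi_le_t k A : (odflt 0 k <= A)%R -> phi k <=+ t A.
Proof. by case: k => [j|] /= jA; [exact: t_mono | rewrite phi0; exact: add0le]. Qed.

Hypothesis phi_fin : finite_semialgebra phi.

Fixpoint in_span (s : seq D) (d : D) : Prop :=
  if s is x :: s' then exists k d', in_span s' d' /\ d = phi k * x + d'
  else d = 0.

Lemma finite_span : exists s, forall d, in_span s d.
Proof.
case: phi_fin => s span_s; exists s => d; have [ks [size_ks ->]] := span_s d.
elim: s ks {span_s d} size_ks => [|x s IH] [|k ks] //= size_ks.
  by rewrite big_ord0.
rewrite big_ord_recl /=; exists k, (\sum_(i < size s) phi (nth zmax0 ks i) * s`_i).
by split=> //; apply: IH; case: size_ks.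
Qed.

Lemma in_spanD s a b : in_span s a -> in_span s b -> in_span s (a + b).
Proof.
elim: s a b => [|x s IH] a b /=; first by move=> -> ->; rewrite addr0.
move=> [ka [a' [sa' ->]]] [kb [b' [sb' ->]]].
exists (zmax_add ka kb), (a' + b'); split; first exact: IH.
by rewrite phiD mulrDl addrACA.
Qed.

Lemma in_spanZ s k a : in_span s a -> in_span s (phi k * a).
Proof.
elim: s a => [|x s IH] a /=; first by move=> ->; rewrite mulr0.
move=> [ka [a' [sa' ->]]]; exists (zmax_mul k ka), (phi k * a').
by split; [exact: IH | rewrite phiM mulrDr mulrA].
Qed.

Lemma in_span_bound s g : in_span s g -> exists A, g <=+ t A * \sum_(x <- s) x.
Proof.
elim: s g => [|x s IH] g /=.
  by move=> ->; exists 0; rewrite big_nil mulr0; exact: (addle_refl addrr _).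
move=> [k [d' [sd' ->]]]; have [A' d'A'] := IH _ sd'.
exists (Num.max A' (odflt 0 k)); rewrite big_cons mulrDr; apply: addleD.
  by apply/addle_mul2r/phi_le_t; rewrite le_max lexx orbT.
by apply: (addle_trans d'A'); apply/addle_mul2r/t_mono; rewrite le_max lexx.
Qed.

(* With [c] the sum of the generators, [c * c <= t A * c] gives [c <= t A]. *)
Lemma bounded_above g : exists A, g <=+ t A.
Proof.
have [s span_s] := finite_span; set c := \sum_(x <- s) x.
have c_neq0 : c <> 0.
  move=> c0; apply: oner_neq0; have [A] := in_span_bound (span_s 1).
  by rewrite -/c c0 mulr0; apply: addle0.
have [A ccA] := in_span_bound (span_s (c * c)); rewrite -/c in ccA.
have cA : c <=+ t A.
  have [c' [cc' _]] := D_division c_neq0.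
  by have := addle_mul2r c' ccA; rewrite -!mulrA cc' !mulr1.
have [B gB] := in_span_bound (span_s g); rewrite -/c in gB.
by exists (B + A); apply: (addle_trans gB); rewrite -tM; apply: addle_mul2l.
Qed.

Lemma bounded_below g : g <> 0 -> exists K, t K <=+ g.
Proof.
move=> g0; have [g' [gg' g'g]] := D_division g0; have [A g'A] := bounded_above g'.
exists (- A); have := addle_mul2l (t (- A)) (addle_mul2r g g'A).
by rewrite g'g mulr1 !mulrA tNl mul1r.
Qed.

Lemma tD_eq1_iter j (x : D) : (j < 0)%R -> t j + x = 1 ->
  forall n, t (j * n.+1%:Z) + x = 1.
Proof.
move=> j_lt0 e1.
have x_le1 : x <=+ 1 by rewrite /addle -{1}e1 addrCA addrr e1.
have t_le1 m : (m <= 0)%R -> t m <=+ 1 by move=> m_le0; rewrite -t0; apply: t_mono.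
elim=> [|n IH]; first by rewrite mulr1.
have E : 1 = (t (j * n.+1%:Z) + x) * (t j + x) by rewrite IH e1 mulr1.
rewrite mulrDl !mulrDr tM in E.
have tx_le : t (j * n.+1%:Z) * x <=+ x.
  by rewrite -{2}(mul1r x); apply/addle_mul2r/t_le1; nia.
have xt_le : x * t j <=+ x by rewrite -{2}(mulr1 x); apply/addle_mul2l/t_le1; lia.
have xx_le : x * x <=+ x by rewrite -{3}(mulr1 x); apply: addle_mul2l.
have cross_le := addle_join addrr (addle_join addrr tx_le xt_le) xx_le.
have -> : j * n.+2%:Z = j * n.+1%:Z + j by lia.
transitivity (t (j * n.+1%:Z + j) + t (j * n.+1%:Z) * x + (x * t j + x * x) + x).
  by rewrite -{1}cross_le !addrA.
by rewrite -E addrC.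
Qed.

(* [t (j * n)] eventually drops below any lower bound [t K] of [x]. *)
Lemma tD_eq1 j (x : D) : (j < 0)%R -> t j + x = 1 -> x = 1.
Proof.
move=> j_lt0 e1.
have x_neq0 : x <> 0.
  move=> x0; move: e1; rewrite x0 addr0 -t0 => /phi_inj [] j0.
  by rewrite j0 ltxx in j_lt0.
have [K tK] := bounded_below x_neq0.
have tjK : t (j * `|K|.+1%:Z) <=+ x.
  by apply: addle_trans tK; apply: t_mono; nia.
by rewrite -(tD_eq1_iter j_lt0 e1 `|K|) tjK.
Qed.

Definition zmax_lt1 (k : zmax) : bool := if k is Some j then (j < 0)%R else true.

Lemma zmax_lt1_add a b : zmax_lt1 a -> zmax_lt1 b -> zmax_lt1 (zmax_add a b).
Proof. by case: a => [i|] //; case: b => [j|] //= i_lt0 j_lt0; rewrite gt_max i_lt0. Qed.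

Lemma absorb k (s0 r : D) : zmax_lt1 k -> s0 <> 0 -> s0 = phi k * s0 + r -> s0 = r.
Proof.
case: k => [j|] /= j_lt0 s0_neq0; last by rewrite phi0 mul0r add0r.
move=> e; have [s' [ss' s's]] := D_division s0_neq0.
have e1 : t j + r * s' = 1 by rewrite -ss' {1}e mulrDl -mulrA ss' mulr1.
by rewrite -(mul1r s0) -(tD_eq1 j_lt0 e1) -mulrA s's mulr1.
Qed.

Lemma zmax_lt1_coef (a b x a' : D) k :
  a + b = x -> a <> x -> a = phi k * x + a' -> zmax_lt1 k.
Proof.
case: k => [j|] //= abx ax ea; rewrite ltNge; apply/negP => j_ge0; apply: ax.
apply: addle_anti; first by rewrite -abx; apply: (addle_addl addrr).
rewrite ea; apply: addle_trans (addle_addl addrr _ a').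
by rewrite -{1}(mul1r x) -t0; apply/addle_mul2r/t_mono.
Qed.

Definition join_irreducible (g : D) :=
  g <> 0 /\ forall x y, x + y = g -> x = g \/ y = g.

(* If [x = a + b] with [a, b <> x], then both coefficients of [x] in the
   expansions of [a] and [b] are below 1, so [x] is absorbed by the rest. *)
Lemma in_span_drop x s : ~ join_irreducible x ->
  (forall d, in_span (x :: s) d) -> forall d, in_span s d.
Proof.
move=> x_red span_xs.
have [x0|x_neq0] := classic (x = 0).
  by move=> d; have [k [d' [sd' ->]]] := span_xs d; rewrite x0 mulr0 add0r.
have [a [b [abx [a_neq b_neq]]]] : exists a b, a + b = x /\ a <> x /\ b <> x.
  apply: NNPP => no_split; apply: x_red; split=> // a b abx.
  apply: NNPP => not_sel; apply: no_split; exists a, b.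
  by split=> //; split=> e; apply: not_sel; [left|right].
have [ka [a' [sa' ea]]] := span_xs a; have [kb [b' [sb' eb]]] := span_xs b.
have ka_lt1 := zmax_lt1_coef abx a_neq ea.
have bax : b + a = x by rewrite addrC.
have kb_lt1 := zmax_lt1_coef bax b_neq eb.
have ex : x = phi (zmax_add ka kb) * x + (a' + b').
  by rewrite phiD mulrDl addrACA -ea -eb abx.
move=> d; have [k [d' [sd' ->]]] := span_xs d.
rewrite (absorb (zmax_lt1_add ka_lt1 kb_lt1) x_neq0 ex).
by apply: in_spanD => //; apply: in_spanZ; apply: in_spanD.
Qed.

Lemma exists_join_irreducible : exists g, join_irreducible g.
Proof.
have [s span_s] := finite_span; apply: NNPP => no_irr.
elim: s span_s => [|x s IH] span_s; first by apply: oner_neq0; exact: (span_s 1).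
by apply: IH; apply: in_span_drop span_s => x_irr; apply: no_irr; exists x.
Qed.

(* Multiplying [a + b] onto a join-irreducible [g] shows that the order is total. *)
Lemma addr_sel (a b : D) : a + b = a \/ a + b = b.
Proof.
have [g [g_neq0 g_irr]] := exists_join_irreducible.
have [ab0|ab_neq0] := classic (a + b = 0).
  by right; rewrite (addr_eq0l addrr ab0) add0r.
have [c [abc cab]] := D_division ab_neq0.
have c_neq0 : c <> 0 by move=> c0; apply: oner_neq0; rewrite -abc c0 mulr0.
have gc_neq0 : g * c <> 0 := div_mulf_neq0 D_division g_neq0 c_neq0.
have egc : g * c * (a + b) = g by rewrite -mulrA cab mulr1.
have := egc; rewrite mulrDr => /g_irr [e|e]; [left|right].
  by apply: (div_mulfI D_division gc_neq0); rewrite e egc.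
by apply: (div_mulfI D_division gc_neq0); rewrite e egc.
Qed.

Definition in_cosets (l : seq D) (g : D) :=
  exists i k, (i < size l)%N /\ g = t k * l`_i.

Lemma in_span_coset s g : in_span s g -> g <> 0 -> in_cosets s g.
Proof.
elim: s g => [|x s IH] g /=; first by move=> ->.
move=> [c [d' [sd' ->]]] g_neq0.
case: (addr_sel (phi c * x) d') => e; rewrite e in g_neq0 *.
  case: c e g_neq0 => [k|] e g_neq0; last by rewrite phi0 mul0r in g_neq0.
  by exists 0%N, k.
by have [i [k [i_lt ->]]] := IH _ sd' g_neq0; exists i.+1, k.
Qed.

Definition in_oc1t (g : D) := 1 <+ g /\ g <=+ t 1.

Lemma lt1t : 1 <+ t 1.
Proof. by split; rewrite -t0; [apply: t_mono | move/phi_inj]. Qed.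

(* Two elements of [(1, t 1]] in one coset differ by a power of [t]; were
   they distinct, the larger would exceed [t 1]. *)
Lemma in_oc1t_coset_uniq g y a b z :
  in_oc1t g -> in_oc1t y -> g = t a * z -> y = t b * z -> g = y.
Proof.
wlog ab : g y a b / (a <= b)%R.
  move=> W gI yI eg ey; case: (lerP a b) => ab; first exact: (W _ _ a b).
  by symmetry; apply: (W _ _ b a) => //; apply: ltW.
move=> [[g1 g_neq1] _] [_ yt] eg ey.
have [eab|a_neq_b] := eqVneq a b; first by rewrite eg ey eab.
have a_lt_b : (a < b)%R by rewrite lt_neqAle a_neq_b ab.
have ey' : y = t (b - a) * g by rewrite ey eg mulrA tM subrK.
have tg_y : t 1 * g <=+ y by rewrite ey'; apply/addle_mul2r/t_mono; lia.
have t_tg : t 1 <=+ t 1 * g by rewrite -{1}(mulr1 (t 1)); apply: addle_mul2l.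
have yt1 : y = t 1 by apply: addle_anti yt (addle_trans t_tg tg_y).
exfalso; apply: g_neq1; apply: (div_mulfI D_division (@t_neq0 1)).
by rewrite mulr1; apply: addle_anti t_tg _; rewrite -{2}yt1.
Qed.

Lemma exists_min_oc1t (l : seq D) : exists p, in_oc1t p /\
  forall g, in_oc1t g -> in_cosets l g -> p <=+ g.
Proof.
elim: l => [|x l [p' [p'I p'_min]]].
  exists (t 1); split=> [|g _ [i [k []]]] //.
  by split; [exact: lt1t | exact: (addle_refl addrr _)].
have [[y [yI [ky ey]]]|no_y] := classic (exists y, in_oc1t y /\ exists k, y = t k * x).
  have [p [pI [pp' py]]] : exists p, in_oc1t p /\ p <=+ p' /\ p <=+ y.
    case: (addr_sel p' y) => e.
      exists y; split=> //.
      by split; [rewrite /addle addrC | exact: (addle_refl addrr _)].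
    by exists p'; split=> //; split; [exact: (addle_refl addrr _) |].
  exists p; split=> // g gI [[|i] [k [i_lt eg]]].
    by rewrite (in_oc1t_coset_uniq gI yI eg ey).
  by apply: addle_trans pp' _; apply: p'_min => //; exists i, k.
exists p'; split=> // g gI [[|i] [k [i_lt eg]]].
  by exfalso; apply: no_y; exists g; split=> //; exists k.
by apply: p'_min => //; exists i, k.
Qed.

Lemma exists_least_gt1 : exists p : D, 1 <+ p /\ forall g : D, 1 <+ g -> p <=+ g.
Proof.
have [s span_s] := finite_span; have [p [pI p_min]] := exists_min_oc1t s.
exists p; split=> [|g g_gt1]; first exact: pI.1.
case: (addr_sel g (t 1)) => e.
  by apply: addle_trans pI.2 _; rewrite /addle addrC.
apply: p_min; first by split.
apply: in_span_coset => // g0; apply: oner_neq0; apply: addle0.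
by rewrite -g0; exact: g_gt1.1.
Qed.

Section LeastGt1.
Variables p q : D.
Hypotheses (p_gt1 : 1 <+ p) (p_least : forall g : D, 1 <+ g -> p <=+ g).
Hypotheses (pq : p * q = 1) (qp : q * p = 1).
Local Notation zp := (zpow p q).

Lemma le1_expr n : 1 <=+ p ^+ n.
Proof.
elim: n => [|n IH]; first by rewrite expr0; exact: (addle_refl addrr _).
rewrite exprSr; apply: addle_trans p_gt1.1 _.
by rewrite -{1}(mul1r p); apply: addle_mul2r.
Qed.

Lemma lt1_expr n : 1 <+ p ^+ n.+1.
Proof.
split; first exact: le1_expr.
rewrite exprSr => e; apply: p_gt1.2; apply: addle_anti p_gt1.1 _.
by rewrite e -{1}(mul1r p); apply/addle_mul2r/le1_expr.
Qed.

Lemma expr_neq0 n : p ^+ n <> 0.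
Proof. by move=> pn0; apply: oner_neq0; rewrite -(exprpq pq n) pn0 mul0r. Qed.

Lemma expr_coset_t (j1 j2 : nat) k1 k2 z : (j1 < j2)%N ->
  p ^+ j1 = t k1 * z -> p ^+ j2 = t k2 * z -> p ^+ (j2 - j1) = t (k2 - k1).
Proof.
move=> j12 e1 e2; have j12' := ltnW j12.
apply: (div_mulIf D_division (@expr_neq0 j1)).
by rewrite -exprD subnK // e2 e1 mulrA tM subrK.
Qed.

Lemma exists_expr_t : exists d e, (0 < d)%N /\ p ^+ d = t e.
Proof.
have [s span_s] := finite_span.
have cosets (j : 'I_(size s).+1) : exists (i : 'I_(size s)) k, p ^+ j = t k * s`_i.
  have [i [k [i_lt e]]] := in_span_coset (span_s (p ^+ j)) (@expr_neq0 j).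
  by exists (Ordinal i_lt), k.
have [j1 [j2 [i [j12 [[k1 e1] [k2 e2]]]]]] := pigeonhole_ord cosets.
exists (j2 - j1)%N, (k2 - k1); split; first by rewrite subn_gt0.
exact: expr_coset_t j12 e1 e2.
Qed.

Lemma expr_t_gt0 d e : (0 < d)%N -> p ^+ d = t e -> (0 < e)%R.
Proof.
move=> d_gt0 pde; rewrite ltNge; apply/negP => e_le0.
have := lt1_expr d.-1; rewrite prednK // => -[p1 p_neq1]; apply: p_neq1.
by apply: addle_anti p1 _; rewrite pde -t0; apply: t_mono.
Qed.

Lemma expr_bracket g : g <> 0 -> exists K : nat, q ^+ K <=+ g /\ g <=+ p ^+ K.
Proof.
move=> g_neq0; have [d [e [d_gt0 pde]]] := exists_expr_t.
have e_gt0 := expr_t_gt0 d_gt0 pde.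
have [A gA] := bounded_above g; have [B Bg] := bounded_below g_neq0.
set N := (`|A| + `|B|)%N; exists (d * N)%N.
have tN : t (e * N%:Z) = p ^+ (d * N) by rewrite tMn exprM pde.
split.
  have -> : q ^+ (d * N) = t (- (e * N%:Z)).
    by rewrite -[RHS]mulr1 -(exprpq pq (d * N)) mulrA -tN tNl mul1r.
  by apply: addle_trans Bg; apply: t_mono; rewrite /N; nia.
by apply: addle_trans gA _; rewrite -tN; apply: t_mono; rewrite /N; nia.
Qed.

Lemma expr_interval N g : 1 <=+ g -> g <=+ p ^+ N -> exists j : nat, g = p ^+ j.
Proof.
elim: N g => [|N IH] g g1 gN.
  by exists 0%N; rewrite expr0; apply: addle_anti => //; rewrite -(expr0 p).
case: (addr_sel g (p ^+ N)) => e; last exact: IH.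
set h := q ^+ N * g.
have eg : g = p ^+ N * h by rewrite /h mulrA (exprpq pq N) mul1r.
have h1 : 1 <=+ h.
  by rewrite -(exprqp qp N) /h; apply: addle_mul2l; rewrite /addle addrC e.
have hp : h <=+ p.
  by have := addle_mul2l (q ^+ N) gN; rewrite exprSr mulrA (exprqp qp N) mul1r.
have [h_eq1|h_neq1] := classic (h = 1); first by exists N; rewrite eg h_eq1 mulr1.
have ph : p <=+ h by apply: p_least; split=> // /esym.
by exists N.+1; rewrite eg exprSr; congr (_ * _); apply: addle_anti.
Qed.

Lemma zpow_neq0 j : zp j <> 0.
Proof. by move=> zj0; apply: oner_neq0; rewrite -(zpowN pq qp j) zj0 mul0r. Qed.

Lemma zpow_eq1 j : zp j = 1 -> j = 0.
Proof.
case: j => [[|n]|n] //= zj1; first by have := (lt1_expr n).2; rewrite zj1.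
by exfalso; apply: (lt1_expr n).2; rewrite -(exprpq pq n.+1) zj1 mulr1.
Qed.

Lemma zpow_inj : injective zp.
Proof.
move=> a b e; apply/eqP; rewrite -subr_eq0; apply/eqP; apply: zpow_eq1.
by rewrite (zpowD pq qp) e zpowN.
Qed.

Lemma le1_zpow j : (0 <= j)%R -> 1 <=+ zp j.
Proof. by case: j => // n _; apply: le1_expr. Qed.

Lemma zpow_max a b : zp a + zp b = zp (Num.max a b).
Proof.
wlog ab : a b / (a <= b)%R.
  move=> W; case/orP: (le_total a b) => ab; first exact: W.
  by rewrite addrC maxC; apply: W.
rewrite (max_idPr ab).
have -> : zp b = zp (b - a) * zp a by rewrite -(zpowD pq qp) subrK.
rewrite -{1}(mul1r (zp a)) -mulrDl; congr (_ * _).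
by apply: le1_zpow; rewrite subr_ge0.
Qed.

Lemma zpow_surj g : g <> 0 -> exists j, g = zp j.
Proof.
move=> g_neq0; have [K [Kg gK]] := expr_bracket g_neq0.
have pg1 : 1 <=+ p ^+ K * g by rewrite -(exprpq pq K); apply: addle_mul2l.
have pgK : p ^+ K * g <=+ p ^+ (K + K) by rewrite exprD; apply: addle_mul2l.
have [j ej] := expr_interval pg1 pgK; exists (j%:Z - K%:Z).
by rewrite -(zpow_subn pq) (commr_expr_pq pq qp) -ej mulrA (exprqp qp K) mul1r.
Qed.

Lemma zpow_cases x : x = 0 \/ exists j, x = zp j.
Proof. by have [->|/zpow_surj] := classic (x = 0); [left | right]. Qed.

Lemma t_zpow : exists n : nat, (0 < n)%N /\ forall k, t k = zp (k * n%:Z).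
Proof.
have [m em] := zpow_surj (@t_neq0 1).
have m_gt0 : (0 < m)%R.
  rewrite ltNge; apply/negP => m_le0; apply: lt1t.2; apply: addle_anti lt1t.1 _.
  rewrite em -(zpowN pq qp m) -{1}(mulr1 (zp m)).
  by apply/addle_mul2l/le1_zpow; rewrite oppr_ge0.
case: m em m_gt0 => // n en n_gt0; exists n; split=> // k.
have tn (a : nat) : t a%:Z = zp (a%:Z * n%:Z).
  by rewrite -{1}[a%:Z]mul1r tMn en -(zpowMn pq qp) mulrC.
have [a [b ->]] := int_subn k.
have tb : t (- b%:Z) = zp (- (b%:Z * n%:Z)).
  by rewrite -[LHS]mulr1 -(zpowN pq qp (b%:Z * n%:Z)) mulrA -tn tNl mul1r.
by rewrite -tM tn tb -(zpowD pq qp) mulrBl.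
Qed.

Definition zlog (g : D) : zmax :=
  if g == 0 then None else Some (epsilon (inhabits 0%R) (fun j => g = zp j)).

Lemma zlog0 : zlog 0 = None. Proof. by rewrite /zlog eqxx. Qed.

Lemma zlog_zpow j : zlog (zp j) = Some j.
Proof.
rewrite /zlog; case: eqP => [/zpow_neq0 //|_]; congr Some; apply: zpow_inj; symmetry.
by apply: (epsilon_spec (inhabits 0%R) (fun j' => zp j = zp j')); exists j.
Qed.

Lemma zlog_bij : bijective zlog.
Proof.
exists (fun o => if o is Some j then zp j else 0); last first.
  by case=> [j|]; rewrite ?zlog0 ?zlog_zpow.
by move=> x; have [->|[j ->]] := zpow_cases x; rewrite ?zlog0 ?zlog_zpow.
Qed.

Lemma zlog_hom : semiring_hom_to_zmax zlog.
Proof.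
split=> [||x y|x y]; first exact: zlog0; first by rewrite -(zpow0 p q) zlog_zpow.
  have [->|[a ->]] := zpow_cases x; first by rewrite add0r zlog0.
  have [->|[b ->]] := zpow_cases y; first by rewrite addr0 zlog0 zlog_zpow.
  by rewrite zpow_max !zlog_zpow.
have [->|[a ->]] := zpow_cases x; first by rewrite mul0r zlog0.
have [->|[b ->]] := zpow_cases y; first by rewrite mulr0 zlog0 zlog_zpow.
by rewrite -(zpowD pq qp) !zlog_zpow.
Qed.

Lemma zlog_phi n : (forall k, t k = zp (k * n%:Z)) ->
  forall k, zlog (phi k) = zmax_pow_embed n k.
Proof. by move=> tn [k|]; [rewrite tn zlog_zpow | rewrite phi0 zlog0]. Qed.

Lemma semialgebra_mulrC (x y : D) : x * y = y * x.
Proof.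
have [->|[a ->]] := zpow_cases x; first by rewrite mul0r mulr0.
have [->|[b ->]] := zpow_cases y; first by rewrite mul0r mulr0.
exact: zpowC.
Qed.

End LeastGt1.

End ZmaxSemialgebra.

Theorem mainTheorem2 (D : pzSemiRingType) (phi : zmax -> D) :
  division_semialgebra_zmax phi ->
  finite_semialgebra phi ->
  exists n : nat, (0 < n)%N /\
    exists psi : D -> zmax,
      [/\ bijective psi, semiring_hom_to_zmax psi,
          forall k : zmax, psi (phi k) = zmax_pow_embed n k
        & forall x y : D, x * y = y * x].
Proof.
move=> phiP phi_fin.
have [p [p_gt1 p_least]] := exists_least_gt1 phiP phi_fin.
have p_neq0 : p <> 0.
  by move=> p0; apply: (oner_neq0 phiP); apply: addle0; rewrite -p0; exact: p_gt1.1.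
have [q [pq qp]] := D_division phiP p_neq0.
have [n [n_gt0 tn]] := t_zpow phiP phi_fin p_gt1 p_least pq qp.
exists n; split=> //; exists (zlog p q); split.
- exact: (zlog_bij phiP phi_fin p_gt1 p_least pq qp).
- exact: (zlog_hom phiP phi_fin p_gt1 p_least pq qp).
- exact: (zlog_phi phiP p_gt1 pq qp tn).
- exact: (semialgebra_mulrC phiP phi_fin p_gt1 p_least pq qp).
Qed.
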